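(* Let $U\in\mathbb{R}^{d\times n}$ be a frame, $z\in\mathbb{R}^n_{++}$, $T\subseteq[n]$, and $h:=h^{U,z}_T$. Then for any $1\le\alpha\le\alpha'$, \[\frac{\alpha}{\alpha'}(\alpha'-\alpha)h'(\alpha)\le h(\alpha')-h(\alpha)\le(\alpha'-\alpha)h'(\alpha).\] Equivalently, with the Bregman divergence $D(\beta\mid\alpha):=h'(\alpha)(\beta-\alpha)+h(\alpha)-h(\beta)$, \[0\le D(\alpha'\mid\alpha)\le\Big(\frac{\alpha'}{\alpha}-1\Big)(h(\alpha')-h(\alpha)).\]
   Context: A frame is a full row rank matrix $U\in\mathbb{R}^{d\times n}$; $Z=\mathrm{diag}(z)$; $U_T,Z_T$ restrictions to $T$; $\bar T=[n]\setminus T$. Progress function: $h^{U,z}_T(\alpha):=\mathrm{tr}[\alpha U_TZ_TU_T^{\mathsf T}(U_{\bar T}Z_{\bar T}U_{\bar T}^{\mathsf T}+\alpha U_TZ_TU_T^{\mathsf T})^{-1}]$ for $\alpha>0$. *)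

From HB Require Import structures.
From mathcomp Require Import all_boot all_order all_algebra.
From mathcomp Require Import all_classical all_reals all_analysis.
Set Implicit Arguments. Unset Strict Implicit. Unset Printing Implicit Defensive.
Import Order.TTheory GRing.Theory Num.Theory.
Local Open Scope ring_scope.

Definition frame (R : realType) (d n : nat) (U : 'M[R]_(d, n)) : Prop :=
  \rank U = d.

(* The vector z restricted to T (entries outside T set to 0), so that
   U *m diag_mx (restr z T) *m U^T = U_T Z_T U_T^T. *)
Definition restr (R : realType) (n : nat) (z : 'rV[R]_n) (T : {set 'I_n}) : 'rV[R]_n :=
  \row_i (if i \in T then z 0 i else 0).

Definition gram (R : realType) (d n : nat) (U : 'M[R]_(d, n)) (z : 'rV[R]_n)
  (T : {set 'I_n}) : 'M[R]_d :=
  U *m diag_mx (restr z T) *m U^T.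

Definition progress (R : realType) (d n : nat) (U : 'M[R]_(d, n)) (z : 'rV[R]_n)
  (T : {set 'I_n}) (a : R) : R :=
  \tr (a *: gram U z T *m invmx (gram U z (~: T) + a *: gram U z T)).

From HB Require Import structures.
From mathcomp Require Import all_boot all_order all_algebra.
From mathcomp Require Import all_classical all_reals all_analysis.
From mathcomp Require Import ring.
Import Order.TTheory GRing.Theory Num.Theory.
Import numFieldNormedType.Exports.
Local Open Scope ring_scope.
Local Open Scope classical_set_scope.

(* Write A := W W^T and B := V V^T for the two weighted Gram matrices, with
   W := U_{~T} Z_{~T}^(1/2) and V := U_T Z_T^(1/2), and X_b := (A + b B)^-1; full row
   rank of U makes A + b B positive definite for b > 0.  Then h b = d - tr (A X_b), and
   the resolvent identity X_a - X_b = (b - a) X_a B X_b gives h b - h a = (b - a) s a b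
   with s a b := tr (A X_a B X_b).  Applying it once more,
     s a b = mu + a kappa   and   s a a = mu + b kappa,
   where kappa := tr (A X_a B X_a B X_b) and mu := tr (A X_a B X_a A X_b) are traces of
   congruences L^T X_b L, hence nonnegative.  The two bounds then reduce to
   (b - a)^2 kappa >= 0 and (b - a)^2 mu / b >= 0, and
   |s a b - s a a| = |b - a| kappa <= |b - a| s a a / b shows that h' a = s a a. *)

Section GramForms.
Context {R : realFieldType} {d : nat}.

Lemma gram_qformE m (M : 'M[R]_(d, m)) (v : 'rV[R]_d) :
  (v *m (M *m M^T) *m v^T) 0 0 = \sum_j ((v *m M) 0 j) ^+ 2.
Proof.
rewrite mulmxA -(mulmxA (v *m M)) -trmx_mul !mxE.
by apply: eq_bigr => j _; rewrite !mxE expr2.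
Qed.

Lemma gram_qform_ge0 m (M : 'M[R]_(d, m)) (v : 'rV[R]_d) :
  0 <= (v *m (M *m M^T) *m v^T) 0 0.
Proof. by rewrite gram_qformE; apply: sumr_ge0 => j _; apply: sqr_ge0. Qed.

Lemma gram_qform_eq0 m (M : 'M[R]_(d, m)) (v : 'rV[R]_d) :
  (v *m (M *m M^T) *m v^T) 0 0 = 0 -> v *m M = 0.
Proof.
rewrite gram_qformE => /eqP; rewrite psumr_eq0 => [/allP vM0|j _]; last exact: sqr_ge0.
apply/rowP => j; rewrite [RHS]mxE.
by have := vM0 j (mem_index_enum j); rewrite sqrf_eq0 => /eqP.
Qed.

Lemma mxtrace_congr_ge0 m (L : 'M[R]_(d, m)) (Q : 'M[R]_d) :
  (forall v : 'rV[R]_d, 0 <= (v *m Q *m v^T) 0 0) -> 0 <= \tr (L^T *m Q *m L).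
Proof.
move=> Q_ge0; apply: sumr_ge0 => i _.
have -> : (L^T *m Q *m L) i i = ((col i L)^T *m Q *m (col i L)^T^T) 0 0.
  rewrite trmxK !mxE; apply: eq_bigr => k _; rewrite !mxE; congr (_ * _).
  by apply: eq_bigr => j _; rewrite !mxE.
exact: Q_ge0.
Qed.

Lemma qformD (v : 'rV[R]_d) (P Q : 'M[R]_d) :
  (v *m (P + Q) *m v^T) 0 0 = (v *m P *m v^T) 0 0 + (v *m Q *m v^T) 0 0.
Proof. by rewrite mulmxDr mulmxDl mxE. Qed.

Lemma qformZ (v : 'rV[R]_d) (b : R) (P : 'M[R]_d) :
  (v *m (b *: P) *m v^T) 0 0 = b * (v *m P *m v^T) 0 0.
Proof. by rewrite -scalemxAr -scalemxAl mxE. Qed.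

End GramForms.

Section Pencil.
Context {R : realFieldType} {d n : nat} (W V : 'M[R]_(d, n)).
Hypothesis kerWV : forall v : 'rV[R]_d, v *m W = 0 -> v *m V = 0 -> v = 0.

Local Notation A := (W *m W^T).
Local Notation B := (V *m V^T).

Definition pencil (b : R) := A + b *: B.
Definition ipencil (b : R) := invmx (pencil b).

Lemma pencil_qform_ge0 b (v : 'rV[R]_d) : 0 <= b -> 0 <= (v *m pencil b *m v^T) 0 0.
Proof.
move=> b_ge0; rewrite qformD qformZ.
by rewrite addr_ge0 ?mulr_ge0 ?gram_qform_ge0.
Qed.

Lemma pencil_unit b : 0 < b -> pencil b \in unitmx.
Proof.
move=> b_gt0; rewrite unitmxE unitfE; apply/negP => /det0P [v v_neq0 vN0].
have : (v *m pencil b *m v^T) 0 0 = 0 by rewrite vN0 mul0mx mxE.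
rewrite qformD qformZ => /eqP.
rewrite paddr_eq0 ?mulr_ge0 ?gram_qform_ge0 ?ltW // mulf_eq0 (gt_eqF b_gt0) /=.
case/andP => /eqP/gram_qform_eq0 vW0 /eqP/gram_qform_eq0 vV0.
by move: v_neq0; rewrite (kerWV _ vW0 vV0) eqxx.
Qed.

Lemma tr_pencil b : (pencil b)^T = pencil b.
Proof. by rewrite linearD linearZ /= !trmx_mul !trmxK. Qed.

Lemma tr_ipencil b : (ipencil b)^T = ipencil b.
Proof. by rewrite trmx_inv tr_pencil. Qed.

Lemma mul_ipencil b : 0 < b -> ipencil b *m pencil b = 1%:M.
Proof. by move=> b_gt0; rewrite mulVmx ?pencil_unit. Qed.

Lemma mul_pencilV b : 0 < b -> pencil b *m ipencil b = 1%:M.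
Proof. by move=> b_gt0; rewrite mulmxV ?pencil_unit. Qed.

Lemma ipencil_qform_ge0 b (v : 'rV[R]_d) : 0 < b -> 0 <= (v *m ipencil b *m v^T) 0 0.
Proof.
move=> b_gt0.
have -> : v *m ipencil b *m v^T = (v *m ipencil b) *m pencil b *m (v *m ipencil b)^T.
  by rewrite trmx_mul tr_ipencil mulmxA -(mulmxA (v *m ipencil b)) mul_pencilV ?mulmx1.
exact/pencil_qform_ge0/ltW.
Qed.

Lemma ipencilB a b : 0 < a -> 0 < b ->
  ipencil a - ipencil b = (b - a) *: (ipencil a *m B *m ipencil b).
Proof.
move=> a_gt0 b_gt0.
rewrite scalemxAl scalemxAr.
have -> : (b - a) *: B = pencil b - pencil a by rewrite opprD addrACA subrr add0r scalerBl.
by rewrite mulmxBr mulmxBl -mulmxA mul_pencilV // mulmx1 mul_ipencil // mul1mx.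
Qed.

Lemma ipencil_commB a b : 0 < a -> 0 < b ->
  ipencil a *m B *m ipencil b = ipencil b *m B *m ipencil a.
Proof.
move=> a_gt0 b_gt0; have [->//|a_neq_b] := eqVneq a b.
apply: (scalerI (a := b - a)); first by rewrite subr_eq0 eq_sym.
by rewrite -ipencilB // -opprB ipencilB // -scaleNr opprB.
Qed.

Lemma ipencil_mulA a : 0 < a -> ipencil a *m A = 1%:M - a *: (ipencil a *m B).
Proof. by move=> a_gt0; rewrite -(mul_ipencil _ a_gt0) mulmxDr -scalemxAr addrK. Qed.

Definition hfun (b : R) := \tr (b *: B *m ipencil b).
Definition slope (a b : R) := \tr (A *m ipencil a *m B *m ipencil b).
Definition kappa (a b : R) := \tr (A *m ipencil a *m B *m ipencil a *m B *m ipencil b).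
Definition mu (a b : R) := \tr (A *m ipencil a *m B *m ipencil a *m A *m ipencil b).

Lemma hfunE b : 0 < b -> hfun b = \tr (1%:M : 'M[R]_d) - \tr (A *m ipencil b).
Proof.
move=> b_gt0; rewrite /hfun; have -> : b *: B = pencil b - A by rewrite addrAC subrr add0r.
by rewrite mulmxBl mul_pencilV // linearB.
Qed.

Lemma hfunB a b : 0 < a -> 0 < b -> hfun b - hfun a = (b - a) * slope a b.
Proof.
move=> a_gt0 b_gt0; rewrite !hfunE // opprB addrC addrA subrK -linearB /=.
by rewrite -mulmxBr ipencilB // -scalemxAr mxtraceZ /slope !mulmxA.
Qed.

Lemma slopeB a b : 0 < a -> 0 < b -> slope a a - slope a b = (b - a) * kappa a b.
Proof.
move=> a_gt0 b_gt0; rewrite /slope -linearB /= -mulmxBr ipencilB //.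
by rewrite -scalemxAr mxtraceZ /kappa !mulmxA.
Qed.

Lemma slope_split {a} b : 0 < a -> slope a b = mu a b + a * kappa a b.
Proof.
move=> a_gt0; rewrite /mu -!(mulmxA _ (ipencil a) A) ipencil_mulA //.
rewrite mulmxBr mulmx1 mulmxBl linearB /= -scalemxAr -scalemxAl mxtraceZ.
by rewrite /slope /kappa !mulmxA subrK.
Qed.

Lemma slope_diag_split {a b} : 0 < a -> 0 < b -> slope a a = mu a b + b * kappa a b.
Proof.
move=> a_gt0 b_gt0; apply/eqP; rewrite -subr_eq0.
by rewrite -(subrK (slope a b) (slope a a)) slopeB // slope_split //; apply/eqP; ring.
Qed.

Lemma kappa_ge0 {a b} : 0 < a -> 0 < b -> 0 <= kappa a b.
Proof.
move=> a_gt0 b_gt0.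
have -> : kappa a b = \tr ((B *m ipencil a *m W)^T *m ipencil b *m (B *m ipencil a *m W)).
  rewrite !trmx_mul tr_ipencil !trmxK !mulmxA.
  have -> : kappa a b = \tr (W^T *m ipencil a *m B *m (ipencil b *m B *m ipencil a) *m W).
    by rewrite -ipencil_commB // mxtrace_mulC /kappa !mulmxA.
  by rewrite !mulmxA.
by apply: mxtrace_congr_ge0 => v; apply: ipencil_qform_ge0.
Qed.

Lemma mu_ge0 {a b} : 0 < a -> 0 < b -> 0 <= mu a b.
Proof.
move=> a_gt0 b_gt0.
have -> : mu a b = \tr ((A *m ipencil a *m V)^T *m ipencil b *m (A *m ipencil a *m V)).
  rewrite !trmx_mul tr_ipencil !trmxK.
  have -> : mu a b = \tr ((A *m ipencil a) *m (B *m ipencil a *m A *m ipencil b)).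
    by rewrite /mu !mulmxA.
  rewrite mxtrace_mulC.
  have -> : B *m ipencil a *m A *m ipencil b *m (A *m ipencil a) =
     V *m (V^T *m ipencil a *m A *m ipencil b *m A *m ipencil a) by rewrite !mulmxA.
  by rewrite mxtrace_mulC !mulmxA.
by apply: mxtrace_congr_ge0 => v; apply: ipencil_qform_ge0.
Qed.

Lemma hfun_secant_bounds a b : 0 < a -> a <= b ->
  a / b * (b - a) * slope a a <= hfun b - hfun a <= (b - a) * slope a a.
Proof.
move=> a_gt0 le_ab; have b_gt0 : 0 < b := lt_le_trans a_gt0 le_ab.
rewrite hfunB // (slope_split b a_gt0) (slope_diag_split a_gt0 b_gt0).
have k_ge0 := kappa_ge0 a_gt0 b_gt0; have m_ge0 := mu_ge0 a_gt0 b_gt0.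
have ba_ge0 : 0 <= b - a by rewrite subr_ge0.
apply/andP; split; rewrite -subr_ge0.
- have -> : (b - a) * (mu a b + a * kappa a b) - a / b * (b - a) * (mu a b + b * kappa a b)
            = (b - a) ^+ 2 * mu a b / b by field; exact: lt0r_neq0 b_gt0.
  by rewrite divr_ge0 ?mulr_ge0 ?sqr_ge0 ?(ltW b_gt0).
- have -> : (b - a) * (mu a b + b * kappa a b) - (b - a) * (mu a b + a * kappa a b)
            = (b - a) ^+ 2 * kappa a b by ring.
  by rewrite mulr_ge0 ?sqr_ge0.
Qed.

Lemma slope_dist {a b} : 0 < a -> 0 < b ->
  `|slope a b - slope a a| <= `|b - a| / b * slope a a.
Proof.
move=> a_gt0 b_gt0.
have -> : slope a b - slope a a = (a - b) * kappa a b by rewrite -opprB slopeB // -mulNr opprB.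
rewrite normrM distrC (ger0_norm (kappa_ge0 a_gt0 b_gt0)) -mulrA ler_wpM2l //.
rewrite ler_pdivlMl // (slope_diag_split a_gt0 b_gt0) lerDr.
exact: mu_ge0.
Qed.

End Pencil.

Section PencilDerivative.
Context {R : realType} {d n : nat} {W V : 'M[R]_(d, n)}.
Hypothesis kerWV : forall v : 'rV[R]_d, v *m W = 0 -> v *m V = 0 -> v = 0.

Local Notation h := (hfun W V).
Local Notation slope := (slope W V).

Lemma dnbhs0_addr_gt0 a : 0 < a -> \forall t \near (0 : R)^', 0 < t + a.
Proof.
move=> a_gt0; near=> t.
have : `|t| < a by near: t; exact: dnbhs0_lt.
by rewrite ltr_norml -subr_gt0 opprK addrC => /andP[].
Unshelve. all: by end_near.
Qed.

Lemma slope_cvg {a} : 0 < a -> (fun t : R => slope a (t + a)) @ (0 : R)^' --> slope a a.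
Proof.
move=> a_gt0.
have bound_cvg : (fun t : R => `|t| / (t + a) * slope a a) @ (0 : R)^' --> 0.
  have : (fun t : R => `|t| / (t + a) * slope a a) @ (0 : R) --> `|0 : R| / (0 + a) * slope a a.
    apply: cvgMr_tmp; apply: cvgM; first by apply: cvg_norm; exact: cvg_id.
    by apply: cvgV; [rewrite add0r gt_eqF | apply: cvgD; [exact: cvg_id | exact: cvg_cst]].
  by rewrite normr0 !mul0r; exact: cvg_within_filter.
apply/subr_cvg0/norm_cvg0P; apply: squeeze_cvgr bound_cvg; last exact: cvg_cst.
near=> t; rewrite normr_ge0 /=.
have ta_gt0 : 0 < t + a by near: t; exact: dnbhs0_addr_gt0.
by have := slope_dist W V kerWV a_gt0 ta_gt0; rewrite addrK.
Unshelve. all: by end_near.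
Qed.

Lemma hfun_derive {a} : 0 < a -> derivable h a 1 /\ derive1 h a = slope a a.
Proof.
move=> a_gt0.
have quotientE : \forall t \near (0 : R)^',
    slope a (t + a) = t^-1 *: ((h \o shift a) (t *: 1) - h a).
  near=> t.
  have t_neq0 : t != 0 by near: t; exact: nbhs_dnbhs_neq.
  have ta_gt0 : 0 < t + a by near: t; exact: dnbhs0_addr_gt0.
  rewrite /= /shift scaler1 (hfunB W V kerWV) // addrK -[t * _]/(t *: _) scalerA.
  by rewrite mulVf // scale1r.
have quotient_cvg : (fun t : R => t^-1 *: ((h \o shift a) (t *: 1) - h a)) @ (0 : R)^'
    --> slope a a by exact: cvg_trans (near_eq_cvg quotientE) (slope_cvg a_gt0).
split; first by apply/cvg_ex; exists (slope a a).
by rewrite derive1E; exact: cvg_lim.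
Unshelve. all: by end_near.
Qed.

End PencilDerivative.

Definition sqrt_restr {R : realType} {n : nat} (z : 'rV[R]_n) (S : {set 'I_n}) : 'rV[R]_n :=
  \row_i Num.sqrt (restr z S 0 i).

Section GramFactor.
Context {R : realType} {d n : nat} {U : 'M[R]_(d, n)} {z : 'rV[R]_n}.
Hypothesis z_gt0 : forall i, 0 < z 0 i.

Lemma gram_sqrt_restrE S :
  gram U z S = (U *m diag_mx (sqrt_restr z S)) *m (U *m diag_mx (sqrt_restr z S))^T.
Proof.
rewrite /gram trmx_mul tr_diag_mx -!mulmxA (mulmxA (diag_mx _)) mulmx_diag.
congr (_ *m (diag_mx _ *m _)); apply/rowP => i; rewrite !mxE -expr2 sqr_sqrtr //.
by case: ifP => // _; apply: ltW.
Qed.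

Lemma sqrt_restr_ker {v : 'rV[R]_d} {S : {set 'I_n}} {i} : i \in S ->
  v *m (U *m diag_mx (sqrt_restr z S)) = 0 -> (v *m U) 0 i = 0.
Proof.
move=> iS /rowP/(_ i); rewrite mulmxA mul_mx_diag !mxE iS => /eqP.
by rewrite mulf_eq0 sqrtr_eq0 leNgt z_gt0 orbF => /eqP.
Qed.

Lemma frame_sqrt_restr_ker T : frame U -> forall v : 'rV[R]_d,
  v *m (U *m diag_mx (sqrt_restr z (~: T))) = 0 ->
  v *m (U *m diag_mx (sqrt_restr z T)) = 0 -> v = 0.
Proof.
move=> frameU v vTc vT; apply/eqP; rewrite -(mulmx_free_eq0 _ (introT eqP frameU)).
apply/eqP/rowP => i; rewrite [RHS]mxE.
have [iT | iTc] := boolP (i \in T); first exact: sqrt_restr_ker iT vT.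
by apply: (sqrt_restr_ker _ vTc); rewrite inE.
Qed.

End GramFactor.

Theorem claim2p18 (R : realType) (d n : nat) (U : 'M[R]_(d, n)) (z : 'rV[R]_n)
  (T : {set 'I_n}) (a a' : R) :
  frame U -> (forall i, 0 < z 0 i) -> 1 <= a -> a <= a' ->
  let h := progress U z T in
  derivable h a 1 /\
  a / a' * (a' - a) * derive1 h a <= h a' - h a /\
  h a' - h a <= (a' - a) * derive1 h a.
Proof.
move=> frameU z_gt0 a_ge1 le_aa' h.
have a_gt0 : 0 < a := lt_le_trans ltr01 a_ge1.
have kerWV := frame_sqrt_restr_ker z_gt0 T frameU.
have -> : h = hfun (U *m diag_mx (sqrt_restr z (~: T))) (U *m diag_mx (sqrt_restr z T)).
  by apply/funext => b; rewrite /h /progress !(gram_sqrt_restrE z_gt0).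
have [h_derivable ->] := hfun_derive kerWV a_gt0.
by split=> //; apply/andP; exact: hfun_secant_bounds.
Qed.
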